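(* If $\mathcal A$ is a univalent typoid, then the identity $\mathrm{id}_A:A\to A$ is a typoid function from $\mathcal A$ to the equality typoid $\mathcal A_0$, with 1-associate $\mathrm{Ua}_{\mathcal A}$ and with $\mathrm{Ua}^2_{\mathcal A}$ as 2-associate with respect to $\mathrm{Ua}_{\mathcal A}$.
   Context: We work in intensional Martin-Löf type theory with a universe $\mathcal U$ (univalent type theory as in the HoTT book). A (2-)typoid $\mathcal A=(A,\simeq_{\mathcal A},\mathrm{eqv}_{\mathcal A},\ast_{\mathcal A},{}^{-1_{\mathcal A}},\cong_{\mathcal A})$ consists of the following data: - a type $A:\mathcal U$; - a type family $\simeq_{\mathcal A}:A\to A\to\mathcal U$; - a dependent function $\mathrm{eqv}:\prod_{x:A}x\simeq x$, whose values are written $\mathrm{eqv}_x$; - a composition $\ast:\prod_{x,y,z:A}(x\simeq y)\to(y\simeq z)\to(x\simeq z)$, written infix; - an inversion ${}^{-1}:\prod_{x,y:A}(x\simeq y)\to(y\simeq x)$; - a family $\cong:\prod_{x,y:A}(x\simeq y)\to(x\simeq y)\to\mathcal U$ which, for each $x,y$, is an equivalence relation on $x\simeq y$, with reflexivity, symmetry and transitivity witnessed by terms. These are required to satisfy the following. For all $x,y,z,w:A$, $e,e_1,d_1:x\simeq y$, $e_2,d_2:y\simeq z$ and $e_3:z\simeq w$, there are terms of the types: - (Typ1) $\mathrm{eqv}_x\ast e\cong e$ and $e\ast\mathrm{eqv}_y\cong e$; - (Typ2) $e\ast e^{-1}\cong\mathrm{eqv}_x$ and $e^{-1}\ast e\cong\mathrm{eqv}_y$;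 - (Typ3) $(e_1\ast e_2)\ast e_3\cong e_1\ast(e_2\ast e_3)$; - (Typ4) $(e_1\cong d_1)\to(e_2\cong d_2)\to(e_1\ast e_2\cong d_1\ast d_2)$. Subscripts are omitted when clear. If $\mathcal A,\mathcal B$ are typoids, a function $f:A\to B$ is a typoid function from $\mathcal A$ to $\mathcal B$ if there are dependent functions - $\Phi_f:\prod_{x,y:A}(x\simeq_{\mathcal A}y)\to(f(x)\simeq_{\mathcal B}f(y))$, called a 1-associate of $f$, and - $\Phi^2_f:\prod_{x,y:A}\prod_{e,d:x\simeq_{\mathcal A}y}(e\cong_{\mathcal A}d)\to(\Phi_f(x,y,e)\cong_{\mathcal B}\Phi_f(x,y,d))$, called a 2-associate with respect to $\Phi_f$, such that for all $x,y,z:A$, $e_1:x\simeq_{\mathcal A}y$ and $e_2:y\simeq_{\mathcal A}z$ there are terms of the types: - (i) $\Phi_f(x,x,\mathrm{eqv}_x)\cong_{\mathcal B}\mathrm{eqv}_{f(x)}$; - (ii) $\Phi_f(x,z,e_1\ast_{\mathcal A}e_2)\cong_{\mathcal B}\Phi_f(x,y,e_1)\ast_{\mathcal B}\Phi_f(y,z,e_2)$. The function $f$ is strict with respect to $\Phi_f$ if $\Phi_f(x,x,\mathrm{eqv}_x)\equiv\mathrm{eqv}_{f(x)}$ holds judgmentally for every $x:A$. For a typoid $\mathcal A$, the equality typoid $\mathcal A_0$ has underlying type $A$ and: - $x\simeq y:\equiv(x=_Ay)$; - $\mathrm{eqv}_x:\equiv\mathrm{refl}_x$; - $\ast$ is path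 concatenation and ${}^{-1}$ is path inversion; - $p\cong q:\equiv(p=_{x=_Ay}q)$. A typoid $\mathcal A$ is univalent if there are: - (a) a dependent function $\mathrm{IdtoEqv}_{\mathcal A}:\prod_{x,y:A}(x=_Ay)\to(x\simeq_{\mathcal A}y)$ which is a 1-associate (with some 2-associate $\mathrm{IdtoEqv}^2_{\mathcal A}$) making $\mathrm{id}_A$ a typoid function from $\mathcal A_0$ to $\mathcal A$, and with respect to which $\mathrm{id}_A$ is strict, i.e. $\mathrm{IdtoEqv}_{\mathcal A}(x,x,\mathrm{refl}_x)\equiv\mathrm{eqv}_x$; - (b) dependent functions $\mathrm{Ua}_{\mathcal A}:\prod_{x,y:A}(x\simeq_{\mathcal A}y)\to(x=_Ay)$ and $\mathrm{Ua}^2_{\mathcal A}:\prod_{x,y:A}\prod_{e,d:x\simeq_{\mathcal A}y}(e\cong_{\mathcal A}d)\to(\mathrm{Ua}_{\mathcal A}(x,y,e)=\mathrm{Ua}_{\mathcal A}(x,y,d))$, such that for all $x,y:A$, $p:x=_Ay$ and $e:x\simeq_{\mathcal A}y$ there are terms of types $\mathrm{Ua}_{\mathcal A}(x,y,\mathrm{IdtoEqv}_{\mathcal A}(x,y,p))=p$ and $\mathrm{IdtoEqv}_{\mathcal A}(x,y,\mathrm{Ua}_{\mathcal A}(x,y,e))\cong_{\mathcal A}e$. It is strictly univalent if moreover $\mathrm{Ua}_{\mathcal A}(x,x,\mathrm{eqv}_x)\equiv\mathrm{refl}_x$ judgmentally for all $x:A$. *)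

Set Implicit Arguments.

Record typoid : Type := Typoid {
  carrier :> Type;
  teq : carrier -> carrier -> Type;
  eqv : forall x : carrier, teq x x;
  comp : forall x y z : carrier, teq x y -> teq y z -> teq x z;
  inv : forall x y : carrier, teq x y -> teq y x;
  cong : forall x y : carrier, teq x y -> teq x y -> Type;
  cong_refl : forall x y (e : teq x y), cong e e;
  cong_sym : forall x y (e d : teq x y), cong e d -> cong d e;
  cong_trans : forall x y (e d c : teq x y), cong e d -> cong d c -> cong e c;
  typ1_l : forall x y (e : teq x y), cong (comp (eqv x) e) e;
  typ1_r : forall x y (e : teq x y), cong (comp e (eqv y)) e;
  typ2_l : forall x y (e : teq x y), cong (comp e (inv e)) (eqv x);
  typ2_r : forall x y (e : teq x y), cong (comp (inv e) e) (eqv y);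
  typ3 : forall x y z w (e1 : teq x y) (e2 : teq y z) (e3 : teq z w),
      cong (comp (comp e1 e2) e3) (comp e1 (comp e2 e3));
  typ4 : forall x y z (e1 d1 : teq x y) (e2 d2 : teq y z),
      cong e1 d1 -> cong e2 d2 -> cong (comp e1 e2) (comp d1 d2)
}.
Arguments teq {t} _ _.
Arguments eqv {t} _.
Arguments comp {t x y z} _ _.
Arguments inv {t x y} _.
Arguments cong {t x y} _ _.

(** Typoid function f : A -> B with 1-associate Phi and 2-associate Phi2. *)
Definition typoid_function (A B : typoid) (f : A -> B)
  (Phi : forall x y : A, teq x y -> teq (f x) (f y))
  (Phi2 : forall (x y : A) (e d : teq x y), cong e d -> cong (Phi x y e) (Phi x y d))
  : Type :=
  ((forall x : A, cong (Phi x x (eqv x)) (eqv (f x))) *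
   (forall (x y z : A) (e1 : teq x y) (e2 : teq y z),
       cong (Phi x z (comp e1 e2)) (comp (Phi x y e1) (Phi y z e2))))%type.

Definition A0 (A : typoid) : typoid.
Proof.
  refine (@Typoid (carrier A) (fun x y => x = y) (fun x => eq_refl)
            (fun x y z p q => eq_trans p q) (fun x y p => eq_sym p)
            (fun x y p q => p = q) _ _ _ _ _ _ _ _ _).
  - intros; reflexivity.
  - intros; now symmetry.
  - intros; etransitivity; eassumption.
  - intros; apply eq_trans_refl_l.
  - intros; apply eq_trans_refl_r.
  - intros; apply eq_trans_sym_inv_r.
  - intros; apply eq_trans_sym_inv_l.
  - intros; symmetry; apply eq_trans_assoc.
  - intros x y z e1 d1 e2 d2 H1 H2; now rewrite H1, H2.
Defined.

(** The canonical IdtoEqv, defined by path induction, so that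
    IdtoEqv x x refl ≡ eqv x holds judgmentally (strictness). *)
Definition IdtoEqv {A : typoid} {x y : A} (p : x = y) : teq x y :=
  match p in _ = y' return teq x y' with eq_refl => eqv x end.

Record univalent (A : typoid) : Type := {
  IdtoEqv2 : forall (x y : A) (p q : x = y), p = q -> cong (IdtoEqv p) (IdtoEqv q);
  IdtoEqv_typoid_fun :
    typoid_function (A0 A) A (fun x => x) (fun x y p => @IdtoEqv A x y p) IdtoEqv2;
  Ua : forall x y : A, teq x y -> x = y;
  Ua2 : forall (x y : A) (e d : teq x y), cong e d -> Ua x y e = Ua x y d;
  Ua_IdtoEqv : forall (x y : A) (p : x = y), Ua x y (IdtoEqv p) = p;
  IdtoEqv_Ua : forall (x y : A) (e : teq x y), cong (IdtoEqv (Ua x y e)) e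
}.


(* Ua inverts IdtoEqv on both sides, and IdtoEqv preserves identities and
   composition; transporting these two functoriality laws across the inverse
   pair gives the corresponding laws for Ua. *)

Section UaFunctorial.

Context {A : typoid} (U : univalent A).

(* Strictness: [IdtoEqv eq_refl] is [eqv x] by conversion. *)
Lemma Ua_eqv (x : A) : Ua U x x (eqv x) = eq_refl.
Proof. exact (Ua_IdtoEqv U (@eq_refl _ x)). Qed.

Lemma IdtoEqv_Ua_trans (x y z : A) (e1 : teq x y) (e2 : teq y z) :
  cong (IdtoEqv (eq_trans (Ua U x y e1) (Ua U y z e2))) (comp e1 e2).
Proof.
  eapply cong_trans.
  - exact (snd (IdtoEqv_typoid_fun U) x y z (Ua U x y e1) (Ua U y z e2)).
  - apply typ4; apply IdtoEqv_Ua.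
Qed.

Lemma Ua_comp (x y z : A) (e1 : teq x y) (e2 : teq y z) :
  Ua U x z (comp e1 e2) = eq_trans (Ua U x y e1) (Ua U y z e2).
Proof.
  rewrite <- (Ua_IdtoEqv U (eq_trans (Ua U x y e1) (Ua U y z e2))).
  apply (Ua2 U), cong_sym, IdtoEqv_Ua_trans.
Qed.

End UaFunctorial.

Theorem mainTheorem9 (A : typoid) (U : univalent A) :
  typoid_function A (A0 A) (fun x => x) (Ua U) (Ua2 U).
Proof.
  split.
  - exact (Ua_eqv U).
  - exact (Ua_comp U).
Qed.
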